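(* Let a group $G$ act on a weighted simplicial complex $\Omega$ on $[n]$, let $\mathcal H_0,\ldots,\mathcal H_n$ be finite-dimensional Hilbert spaces with $\mathcal H_i=\mathcal H_j$ whenever $i,j$ lie in the same $G$-orbit, and $\mathcal V=\mathcal B(\mathcal H_0)\otimes\cdots\otimes\mathcal B(\mathcal H_n)$. Assume that ${\rm rank}_{(\Omega,G)}(\xi)<\infty$ for every $G$-invariant $\xi\in\mathcal V$. Then every positive semidefinite $G$-invariant $\sigma\in\mathcal V$ satisfies ${\rm puri\text{-}rank}_{(\Omega,G)}(\sigma)<\infty$.
   Context: $[n]=\{0,\ldots,n\}$. A weighted simplicial complex (wsc) on $[n]$ is a function $\Omega\colon\mathcal P([n])\to\mathbb N=\{0,1,\ldots\}$ such that $S_1\subseteq S_2$ implies $\Omega(S_1)\mid\Omega(S_2)$; simplices are sets with $\Omega(S)\neq0$, every singleton is assumed to be a simplex, facets are inclusion-maximal simplices, $\mathcal F$ is the set of facets. $\widetilde{\mathcal F}$ is the multiset containing each facet $F$ exactly $\Omega(F)$ times, with collapse map $c$; $\widetilde{\mathcal F}_i$ consists of the copies of facets containing $i$. A group action of $G$ on $\Omega$ is an action on $[n]$ with $\Omega(gS)=\Omega(S)$, together with an action on $\widetilde{\mathcal F}$ with $c(gx)=gc(x)$. $G$ acts on $\mathcal V$ (and on analogous tensor products) by permuting tensor factors according to its action on $[n]$. $\mathcal V\subseteq\mathcal B(\mathcal H_0\otimes\cdots\otimes\mathcal H_n)$, which defines positive semidefiniteness. For $\beta\colon\widetilde{\mathcal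 F}_i\to\mathcal I$, ${}^g\beta\colon\widetilde{\mathcal F}_{gi}\to\mathcal I$ is $x\mapsto\beta(g^{-1}x)$; $\alpha_{\mid i}$ is restriction to $\widetilde{\mathcal F}_i$. For a tensor product $\mathcal W=\mathcal W_0\otimes\cdots\otimes\mathcal W_n$ of vector spaces (equal along orbits), an $(\Omega,G)$-decomposition of $w\in\mathcal W$ is a finite set $\mathcal I$ and local vectors $w^{[i]}_\beta\in\mathcal W_i$ ($\beta\in\mathcal I^{\widetilde{\mathcal F}_i}$) with $w=\sum_{\alpha\in\mathcal I^{\widetilde{\mathcal F}}}w^{[0]}_{\alpha_{\mid0}}\otimes\cdots\otimes w^{[n]}_{\alpha_{\mid n}}$ and $w^{[i]}_\beta=w^{[gi]}_{{}^g\beta}$ for all $i,g,\beta$; ${\rm rank}_{(\Omega,G)}(w)$ is the minimal $|\mathcal I|$ ($\infty$ if none). An $(\Omega,G)$-purification of $\sigma\in\mathcal V$ is an element $\xi\in\mathcal B(\mathcal H_0,\mathcal H_0')\otimes\cdots\otimes\mathcal B(\mathcal H_n,\mathcal H_n')$, for some Hilbert spaces $\mathcal H_i'$, with $\sigma=\xi^*\xi$ and ${\rm rank}_{(\Omega,G)}(\xi)<\infty$; ${\rm puri\text{-}rank}_{(\Omega,G)}(\sigma)$ is the minimum of ${\rm rank}_{(\Omega,G)}(\xi)$ over all $(\Omega,G)$-purifications $\xi$ of $\sigma$ ($\infty$ if none). *)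

From HB Require Import structures.
From mathcomp Require Import all_boot all_order all_algebra.
Set Implicit Arguments. Unset Strict Implicit. Unset Printing Implicit Defensive.
Import Order.TTheory GRing.Theory Num.Theory.
Local Open Scope ring_scope.

(** Vertex set [n] = {0,...,n} is 'I_n.+1. *)

Definition wsc (n : nat) (Omega : {set 'I_n.+1} -> nat) : Prop :=
  (forall S1 S2 : {set 'I_n.+1}, S1 \subset S2 -> (Omega S1 %| Omega S2)%N) /\
  (forall i : 'I_n.+1, Omega [set i] <> 0%N).

Definition facet (n : nat) (Omega : {set 'I_n.+1} -> nat) (F : {set 'I_n.+1}) : bool :=
  (Omega F != 0%N) && [forall S : {set 'I_n.+1}, (F \proper S) ==> (Omega S == 0%N)].

(** The multiset F~ : each facet F appears Omega F times (copies indexed by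
    'I_(Omega F)); the collapse map c is [ctag]. *)
Definition Ftilde (n : nat) (Omega : {set 'I_n.+1} -> nat) : finType :=
  {x : {F : {set 'I_n.+1} & 'I_(Omega F)} | facet Omega (tag x)}.

Definition ctag (n : nat) (Omega : {set 'I_n.+1} -> nat) (x : Ftilde Omega)
  : {set 'I_n.+1} := tag (val x).

Definition Ftilde_i (n : nat) (Omega : {set 'I_n.+1} -> nat) (i : 'I_n.+1) : finType :=
  {x : Ftilde Omega | i \in ctag x}.

Definition restr (n : nat) (Omega : {set 'I_n.+1} -> nat) (r : nat)
  (alpha : {ffun Ftilde Omega -> 'I_r}) (i : 'I_n.+1) : {ffun Ftilde_i Omega i -> 'I_r} :=
  [ffun x => alpha (val x)].

Definition is_group (G : Type) (mul : G -> G -> G) (one : G) (inv : G -> G) : Prop :=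
  (forall a b c, mul a (mul b c) = mul (mul a b) c) /\
  (forall a, mul one a = a) /\
  (forall a, mul (inv a) a = one).

Definition is_action (G X : Type) (mul : G -> G -> G) (one : G) (act : G -> X -> X) : Prop :=
  (forall x, act one x = x) /\
  (forall g h x, act (mul g h) x = act g (act h x)).

Definition wsc_action (n : nat) (Omega : {set 'I_n.+1} -> nat)
  (G : Type) (mul : G -> G -> G) (one : G)
  (actV : G -> 'I_n.+1 -> 'I_n.+1) (actF : G -> Ftilde Omega -> Ftilde Omega) : Prop :=
  is_action mul one actV /\ is_action mul one actF /\
  (forall g (S : {set 'I_n.+1}), Omega (actV g @: S) = Omega S) /\
  (forall g (x : Ftilde Omega), ctag (actF g x) = actV g @: ctag x).

(** Multi-indices for a tensor product of spaces C^(a 0) (x) ... (x) C^(a n):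
    functions x with x i < a i (stored in a common ordinal type). *)
Definition midx (n : nat) (a : 'I_n.+1 -> nat) : finType :=
  {x : {ffun 'I_n.+1 -> 'I_(\max_(i < n.+1) a i).+1} | [forall i, (x i < a i)%N]}.

Definition midx_at (n : nat) (a : 'I_n.+1 -> nat) (x : midx a) (i : 'I_n.+1) : nat :=
  val ((val x) i).

(** Permuting tensor factors: (x o g)(i) = x (g i); for an elementary tensor
    (g . (A_0 (x) ... (x) A_n)) (x, y) = prod_i A_i (x (g i), y (g i)).
    (insubd is only used for typing: the result is a valid multi-index when a
    is constant on orbits.) *)
Definition permidx (n : nat) (a : 'I_n.+1 -> nat) (p : 'I_n.+1 -> 'I_n.+1) (x : midx a)
  : midx a := insubd x [ffun i => (val x) (p i)].

(** Elements of W_0 (x) ... (x) W_n with W_i = B(C^(b i), C^(a i)) = a i x b i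
    matrices are represented by their matrix entries w.r.t. the product bases. *)
Definition tensor (C : Type) (n : nat) (a b : 'I_n.+1 -> nat) := midx a -> midx b -> C.

Definition G_invariant (C : Type) (n : nat) (a b : 'I_n.+1 -> nat) (G : Type)
  (actV : G -> 'I_n.+1 -> 'I_n.+1) (xi : tensor C a b) : Prop :=
  forall g x y, xi (permidx (actV g) x) (permidx (actV g) y) = xi x y.

(** An (Omega,G)-decomposition of xi with index set I = 'I_r.  The local vector
    w^[i]_beta in W_i = 'M_(a i, b i) is given by its entries w i beta j k
    (only j < a i, k < b i are relevant). *)
Definition OG_decomposition (C : numClosedFieldType) (n : nat) (Omega : {set 'I_n.+1} -> nat)
  (G : Type) (inv : G -> G)
  (actV : G -> 'I_n.+1 -> 'I_n.+1) (actF : G -> Ftilde Omega -> Ftilde Omega)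
  (a b : 'I_n.+1 -> nat) (xi : tensor C a b) (r : nat)
  (w : forall i : 'I_n.+1, {ffun Ftilde_i Omega i -> 'I_r} -> nat -> nat -> C) : Prop :=
  (forall (x : midx a) (y : midx b),
      xi x y = \sum_(alpha : {ffun Ftilde Omega -> 'I_r})
                 \prod_(i < n.+1) w i (restr alpha i) (midx_at x i) (midx_at y i)) /\
  (* w^[i]_beta = w^[gi]_{g beta}, where (g beta)(y) = beta(g^-1 y) *)
  (forall (i : 'I_n.+1) (g : G) (beta : {ffun Ftilde_i Omega i -> 'I_r})
          (gbeta : {ffun Ftilde_i Omega (actV g i) -> 'I_r}),
      (forall (y : Ftilde_i Omega (actV g i)) (x : Ftilde_i Omega i),
          val x = actF (inv g) (val y) -> gbeta y = beta x) ->
      forall j k : nat, (j < a i)%N -> (k < b i)%N ->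
        w i beta j k = w (actV g i) gbeta j k).

Definition OG_rank_finite (C : numClosedFieldType) (n : nat) (Omega : {set 'I_n.+1} -> nat)
  (G : Type) (inv : G -> G)
  (actV : G -> 'I_n.+1 -> 'I_n.+1) (actF : G -> Ftilde Omega -> Ftilde Omega)
  (a b : 'I_n.+1 -> nat) (xi : tensor C a b) : Prop :=
  exists r : nat, exists w : forall i : 'I_n.+1, {ffun Ftilde_i Omega i -> 'I_r} -> nat -> nat -> C,
    OG_decomposition inv actV actF xi w.

Definition psd (C : numClosedFieldType) (n : nat) (d : 'I_n.+1 -> nat) (sigma : tensor C d d)
  : Prop :=
  forall v : midx d -> C,
    0 <= \sum_(x : midx d) \sum_(y : midx d) (v x)^* * sigma x y * v y.

Definition adj_mul (C : numClosedFieldType) (n : nat) (d d' : 'I_n.+1 -> nat)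
  (xi : tensor C d' d) : tensor C d d :=
  fun x y => \sum_(z : midx d') (xi z x)^* * xi z y.

(** puri-rank_(Omega,G)(sigma) < oo : there is an (Omega,G)-purification,
    i.e. spaces H_i' = C^(d' i) (equal along orbits) and
    xi in B(H_0,H_0') (x) ... (x) B(H_n,H_n') with sigma = xi^* xi and
    rank_(Omega,G)(xi) < oo. *)
Definition OG_purirank_finite (C : numClosedFieldType) (n : nat) (Omega : {set 'I_n.+1} -> nat)
  (G : Type) (inv : G -> G)
  (actV : G -> 'I_n.+1 -> 'I_n.+1) (actF : G -> Ftilde Omega -> Ftilde Omega)
  (d : 'I_n.+1 -> nat) (sigma : tensor C d d) : Prop :=
  exists d' : 'I_n.+1 -> nat,
    (forall g i, d' (actV g i) = d' i) /\
    exists xi : tensor C d' d,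
      sigma = adj_mul xi /\ OG_rank_finite inv actV actF xi.

From HB Require Import structures.
From mathcomp Require Import all_boot all_order all_algebra fingroup perm.
From mathcomp Require Import sesquilinear spectral ring.
From Stdlib Require Import FunctionalExtensionality.
Set Implicit Arguments. Unset Strict Implicit. Unset Printing Implicit Defensive.
Import Order.TTheory GRing.Theory Num.Theory.
Local Open Scope ring_scope.
Local Open Scope sesquilinear_scope.

(* A positive semidefinite sigma is purified by its square root xi = sqrt sigma, with
   H_i' = H_i.  Diagonalizing sigma = P^* D P with P unitary, sqrt sigma = P^* sqrt(D) P
   commutes with every matrix commuting with sigma, because a matrix commuting with the
   diagonal D only links basis vectors with equal eigenvalues.  The group acts on the
   product basis by permutation matrices commuting with sigma, so sqrt sigma is
   G-invariant, and the hypothesis gives it finite (Omega,G)-rank. *)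

Section QuadraticForm.
Variables (C : numClosedFieldType) (N : nat).
Implicit Types (A B : 'M[C]_N) (w : 'I_N -> C).

Definition qform A w := \sum_k \sum_l (w k)^* * A k l * w l.

Definition psdmx A := forall w, 0 <= qform A w.

Lemma qformB A B w : qform (A - B) w = qform A w - qform B w.
Proof.
rewrite /qform -sumrB; apply: eq_bigr => k _; rewrite -sumrB.
by apply: eq_bigr => l _; rewrite !mxE mulrBr mulrBl.
Qed.

Lemma qform_trmxC A w : qform (A^t*) w = (qform A w)^*.
Proof.
rewrite /qform rmorph_sum exchange_big; apply: eq_bigr => k _.
rewrite rmorph_sum; apply: eq_bigr => l _.
by rewrite !mxE !rmorphM /= conjCK; ring.
Qed.

Lemma qform_two_points A i j a b :
  qform A (fun k => a *+ (k == i) + b *+ (k == j)) =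
  a^* * a * A i i + a^* * b * A i j + b^* * a * A j i + b^* * b * A j j.
Proof.
have sum_deltaR (F : 'I_N -> C) c m : \sum_l F l * (c *+ (l == m)) = F m * c.
  by rewrite (bigD1 m) //= eqxx big1 ?addr0 // => l /negbTE ->; rewrite mulr0.
have sum_deltaL (F : 'I_N -> C) c m : \sum_l (c *+ (l == m)) * F l = c * F m.
  by rewrite (bigD1 m) //= eqxx big1 ?addr0 // => l /negbTE ->; rewrite mul0r.
rewrite /qform.
under eq_bigr do rewrite (eq_bigr _ (fun l _ => mulrDr _ _ _)) big_split /=.
under eq_bigr do rewrite !sum_deltaR rmorphD /= !rmorphMn -!mulrA -mulrDr mulrDl.
by rewrite big_split /= !sum_deltaL; ring.
Qed.

Lemma qform_eq0 B : (forall w, qform B w = 0) -> B = 0.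
Proof.
move=> B0; have Bij := qform_two_points B.
have Bkk k : B k k = 0.
  by have := Bij k k 1 0; rewrite B0 rmorph0 rmorph1 !(mulr0, mul0r, addr0) !mul1r.
apply/matrixP => i j; rewrite mxE.
have skewB : B i j + B j i = 0.
  by have := Bij i j 1 1; rewrite B0 rmorph1 !mul1r !Bkk add0r addr0.
have symB : B i j = B j i.
  have := Bij i j 1 'i; rewrite B0 rmorph1 conjCi !Bkk !mul1r mulr1 mulr0 addr0 add0r.
  rewrite mulNr -mulrBr => /esym/eqP; rewrite mulf_eq0 (negPf (neq0Ci C)) subr_eq0 /=.
  by move=> /eqP.
have two_nz : (2 : C) != 0 by rewrite pnatr_eq0.
by apply/eqP; rewrite -(mulrI_eq0 _ (mulfI two_nz)) mulr_natl mulr2n {2}symB skewB.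
Qed.

Lemma psdmx_herm A : psdmx A -> A^t* = A.
Proof.
move=> Apsd; apply/eqP; rewrite -subr_eq0; apply/eqP/qform_eq0 => w.
have /CrealP Areal : qform A w \is Num.real by apply/ger0_real.
by rewrite qformB qform_trmxC Areal subrr.
Qed.

End QuadraticForm.

Lemma comm_mx_conj (C : comRingType) m n (Q : 'M[C]_(m, n)) (Q' : 'M_(n, m))
    (X M : 'M_n) :
  Q' *m Q = 1%:M -> comm_mx X M -> comm_mx (Q *m X *m Q') (Q *m M *m Q').
Proof.
rewrite /comm_mx => QQ' XM.
by rewrite -!mulmxA !(mulmxA Q') QQ' !mul1mx (mulmxA X) XM !mulmxA.
Qed.

Lemma comm_diag_mx_map (C : idomainType) n (B : 'M[C]_n) (D : 'rV_n) (f : C -> C) :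
  comm_mx B (diag_mx D) -> comm_mx B (diag_mx (map_mx f D)).
Proof.
move=> /matrixP BD; apply/matrixP => k l; rewrite mul_mx_diag mul_diag_mx !mxE.
have := BD k l; rewrite mul_mx_diag mul_diag_mx !mxE => eqD.
have : B k l * (D 0 l - D 0 k) = 0 by rewrite mulrBr eqD mulrC subrr.
move/eqP; rewrite mulf_eq0 subr_eq0 => /orP[/eqP -> | /eqP ->]; first by rewrite mulr0 mul0r.
exact: mulrC.
Qed.

Section SquareRoot.
Variables (C : numClosedFieldType) (N : nat).
Implicit Types (A X : 'M[C]_N).

Let P A := spectralmx A.
Let D A := spectral_diag A.

Lemma spectral_mulmxtC A : P A *m (P A)^t* = 1%:M.
Proof. exact/unitarymxP/spectral_unitarymx. Qed.

Lemma spectral_trmxC_mul A : (P A)^t* *m P A = 1%:M.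
Proof. exact/mulmx1C/spectral_mulmxtC. Qed.

Lemma psdmx_spectralE A : psdmx A -> A = (P A)^t* *m diag_mx (D A) *m P A.
Proof.
move=> Apsd; have /orthomx_spectralP : A \is normalmx.
  by apply/normalmxP; rewrite psdmx_herm.
by rewrite invmx_unitary ?spectral_unitarymx.
Qed.

Lemma psdmx_spectral_diag A :
  psdmx A -> P A *m A *m (P A)^t* = diag_mx (D A).
Proof.
move=> Apsd; rewrite {2}(psdmx_spectralE Apsd) !mulmxA spectral_mulmxtC mul1mx.
by rewrite -mulmxA spectral_mulmxtC mulmx1.
Qed.

Lemma psdmx_spectral_diag_ge0 A : psdmx A -> forall k, 0 <= D A 0 k.
Proof.
move=> Apsd k; suff <- : qform A (fun l => (P A k l)^*) = D A 0 k by apply: Apsd.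
have -> : D A 0 k = diag_mx (D A) k k by rewrite mxE eqxx mulr1n.
rewrite -(psdmx_spectral_diag Apsd) mxE /qform exchange_big /=.
apply: eq_bigr => l _; rewrite !mxE mulr_suml; apply: eq_bigr => m _.
by rewrite conjCK.
Qed.

Definition sqrtmx A := (P A)^t* *m diag_mx (map_mx sqrtC (D A)) *m P A.

Lemma sqrtmx_sq A : psdmx A -> (sqrtmx A)^t* *m sqrtmx A = A.
Proof.
move=> Apsd; set R := map_mx sqrtC (D A).
have Rreal : map_mx Num.conj R = R.
  apply/matrixP => i k; rewrite ord1 !mxE; apply/CrealP/ger0_real.
  by rewrite sqrtC_ge0 psdmx_spectral_diag_ge0.
have RR : diag_mx R *m diag_mx R = diag_mx (D A).
  apply/matrixP => i k; rewrite mul_diag_mx !mxE.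
  by rewrite mulrnAr -expr2 sqrtCK.
rewrite /sqrtmx !trmx_mul !map_mxM trmxCK tr_diag_mx map_diag_mx Rreal.
rewrite -!mulmxA (mulmxA (P A)) spectral_mulmxtC mul1mx (mulmxA (diag_mx R)) RR.
by rewrite mulmxA -psdmx_spectralE.
Qed.

Lemma comm_sqrtmx A X : psdmx A -> comm_mx X A -> comm_mx X (sqrtmx A).
Proof.
move=> Apsd XA.
have /comm_mx_conj : comm_mx (P A *m X *m (P A)^t*) (diag_mx (map_mx sqrtC (D A))).
  apply: comm_diag_mx_map.
  by rewrite -(psdmx_spectral_diag Apsd); apply: comm_mx_conj (spectral_trmxC_mul A) XA.
move=> /(_ _ ((P A)^t*) (P A) (spectral_mulmxtC A)).
by rewrite !mulmxA spectral_trmxC_mul mul1mx -mulmxA spectral_trmxC_mul mulmx1.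
Qed.

End SquareRoot.

Lemma comm_perm_mxP (R : pzRingType) N (s : 'S_N) (M : 'M[R]_N) :
  comm_mx (perm_mx s) M <-> forall k l, M (s k) (s l) = M k l.
Proof.
rewrite /comm_mx -row_permE -[s in M *m perm_mx s]invgK -col_permE.
split=> [/matrixP sM k l | sM]; last first.
  by apply/matrixP => k l; rewrite !mxE -{1}(permKV s l) sM.
by have := sM k (s l); rewrite !mxE permK.
Qed.

Definition enum_perm (T : finType) (f : T -> T) (f_inj : injective f) : 'S_#|T| :=
  perm (inj_comp (@enum_rank_inj T) (inj_comp f_inj (@enum_val_inj _ _))
    : injective (enum_rank \o f \o enum_val)).

Lemma enum_permE (T : finType) (f : T -> T) (f_inj : injective f) (x : T) :
  enum_perm f_inj (enum_rank x) = enum_rank (f x).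
Proof. by rewrite permE /= enum_rankK. Qed.

Lemma action_inj (G X : Type) (mul : G -> G -> G) (one : G) (inv : G -> G)
    (act : G -> X -> X) :
  is_group mul one inv -> is_action mul one act -> forall g, injective (act g).
Proof.
move=> [_ [_ mulVg]] [act1 actM] g x y eq_gxy.
by rewrite -(act1 x) -(act1 y) -(mulVg g) !actM eq_gxy.
Qed.

Section PermIdx.
Variable n : nat.
Implicit Type a : 'I_n.+1 -> nat.

Lemma permidx_val a (p : 'I_n.+1 -> 'I_n.+1) (x : midx a) :
  (forall i, a (p i) = a i) -> val (permidx p x) = [ffun i => val x (p i)].
Proof.
move=> ap; rewrite /permidx insubdK //; apply/forallP => i; rewrite ffunE.
by have := forallP (valP x) (p i); rewrite ap.
Qed.

Lemma permidx_inj a (p : 'I_n.+1 -> 'I_n.+1) :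
  injective p -> (forall i, a (p i) = a i) -> injective (permidx p : midx a -> midx a).
Proof.
move=> p_inj ap x y /(congr1 val); rewrite !permidx_val // => /ffunP eq_xy.
apply/val_inj/ffunP => j; have [q _ qK] := injF_bij p_inj.
by have := eq_xy (q j); rewrite !ffunE qK.
Qed.

End PermIdx.

Section TensorMatrix.
Variables (C : numClosedFieldType) (n : nat).
Implicit Types (a b d : 'I_n.+1 -> nat).

Definition tensor_mx a b (t : tensor C a b) : 'M[C]_(#|midx a|, #|midx b|) :=
  \matrix_(k, l) t (enum_val k) (enum_val l).

Definition mx_tensor a b (M : 'M[C]_(#|midx a|, #|midx b|)) : tensor C a b :=
  fun x y => M (enum_rank x) (enum_rank y).

Lemma tensor_mxK a b : cancel (@tensor_mx a b) (@mx_tensor a b).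
Proof.
move=> t; apply: functional_extensionality => x.
by apply: functional_extensionality => y; rewrite /mx_tensor mxE !enum_rankK.
Qed.

Lemma psd_mx_tensor d (M : 'M[C]_#|midx d|) : psd (mx_tensor M) -> psdmx M.
Proof.
move=> Mpsd w; have := Mpsd (w \o enum_rank); congr (0 <= _).
rewrite /qform [RHS](reindex enum_rank (onW_bij _ (@enum_rank_bij _))).
apply: eq_bigr => x _.
by rewrite [RHS](reindex enum_rank (onW_bij _ (@enum_rank_bij _))).
Qed.

Lemma adj_mul_mx_tensor d d' (M : 'M[C]_(#|midx d'|, #|midx d|)) :
  adj_mul (mx_tensor M) = mx_tensor (M^t* *m M).
Proof.
apply: functional_extensionality => x; apply: functional_extensionality => y.
rewrite /adj_mul /mx_tensor mxE (reindex enum_rank (onW_bij _ (@enum_rank_bij _))).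
by apply: eq_bigr => z _; rewrite !mxE.
Qed.

Lemma mx_tensor_invariantP d (M : 'M[C]_#|midx d|) (f : midx d -> midx d)
    (f_inj : injective f) :
  (forall x y, mx_tensor M (f x) (f y) = mx_tensor M x y) <->
  comm_mx (perm_mx (enum_perm f_inj)) M.
Proof.
rewrite comm_perm_mxP /mx_tensor; split=> [fM k l | fM x y].
  by rewrite -[k]enum_valK -[l]enum_valK !enum_permE fM.
by rewrite -!enum_permE fM.
Qed.

End TensorMatrix.

Theorem theorem3p20
  (n : nat) (Omega : {set 'I_n.+1} -> nat) (HOmega : wsc Omega)
  (G : Type) (mul : G -> G -> G) (one : G) (inv : G -> G)
  (HG : is_group mul one inv)
  (actV : G -> 'I_n.+1 -> 'I_n.+1) (actF : G -> Ftilde Omega -> Ftilde Omega)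
  (Hact : wsc_action mul one actV actF)
  (C : numClosedFieldType) (d : 'I_n.+1 -> nat)
  (Hd : forall (g : G) (i : 'I_n.+1), d (actV g i) = d i)
  (Hrank : forall xi : tensor C d d,
      G_invariant actV xi -> OG_rank_finite inv actV actF xi) :
  forall sigma : tensor C d d,
    psd sigma -> G_invariant actV sigma ->
    OG_purirank_finite inv actV actF sigma.
Proof.
move=> sigma sigma_psd sigma_inv.
have permidx_actV_inj g : injective (permidx (actV g) : midx d -> midx d).
  exact: permidx_inj (action_inj HG (proj1 Hact) (g := g)) (Hd g).
rewrite -(tensor_mxK sigma) in sigma_psd sigma_inv *.
set A := tensor_mx sigma in sigma_psd sigma_inv *.
have A_psd := psd_mx_tensor sigma_psd.
exists d; split => //; exists (mx_tensor (sqrtmx A)); split.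
  by rewrite adj_mul_mx_tensor sqrtmx_sq.
apply: Hrank => g; apply/(mx_tensor_invariantP _ (permidx_actV_inj g)).
apply: comm_sqrtmx => //; apply/(mx_tensor_invariantP _ (permidx_actV_inj g)).
exact: sigma_inv.
Qed.
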